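(* Fix a node $n$ of the control flow graph and regard its extractor functions as functions of their inputs: $\mathit{Def}(a)$, $\mathit{Kill}(a)$, $\mathit{Pointee}(a)$ (with $A$ replaced by $a$) and $\mathit{Ref}(l,a)$ (with $A$ replaced by $a$ and $\mathit{Lout}_n$ replaced by $l$), for $l \subseteq \mathbf{P}$ and $a \subseteq \mathbf{P}\times\mathbf{V}$. Define $$f_L(l,a) = (l - \mathit{Kill}(a)) \cup \mathit{Ref}(l,a),\qquad f_A(l,a) = \Big(\big(a - (\mathit{Kill}(a)\times \mathbf{V})\big)\cup\big(\mathit{Def}(a)\times \mathit{Pointee}(a)\big)\Big)\Big|_{l}.$$ Then $f_L$ and $f_A$ are monotonic with respect to the data-flow order: for all $l_1,l_2\subseteq\mathbf{P}$ and $a_1,a_2\subseteq \mathbf{P}\times\mathbf{V}$ with $l_1\supseteq l_2$ and $a_1\supseteq a_2$, we have $f_L(l_1,a_1)\supseteq f_L(l_2,a_2)$ and $f_A(l_1,a_1)\supseteq f_A(l_2,a_2)$.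
   Context: $\mathbf{V}$ is a finite set of variables, $\mathbf{P}\subseteq\mathbf{V}$ the set of pointer variables, and $\mathbf{V}\setminus\mathbf{P}$ contains a special element $?$ (undefined location). Every node (statement) is of one of the forms: ''use $x$'', ''$x=\&a$'', ''$x=y$'', ''$x=*y$'', ''$*x=y$'', or ''other'', where $x,y\in\mathbf{P}$, $a\in\mathbf{V}$. Relation notation for $R\subseteq\mathbf{P}\times\mathbf{V}$ and a set $X$: $R\,X=\{v\mid u\in X,\ (u,v)\in R\}$; $R|_X=\{(u,v)\in R\mid u\in X\}$; $R^2=\{(u,w)\mid (u,v)\in R,\ (v,w)\in R\}$ (so necessarily $v\in\mathbf{P}$). $\mathit{Must}(R)=\bigcup_{x\in\mathbf{P}}\{x\}\times M_x$, where $M_x=\mathbf{V}$ if $R|_{\{x\}}=\emptyset$ or $R|_{\{x\}}=\{(x,?)\}$; $M_x=\{y\}$ if $R|_{\{x\}}=\{(x,y)\}$ with $y\neq ?$; and $M_x=\emptyset$ otherwise. Extractor functions of node $n$, given a points-to relation $A\subseteq\mathbf{P}\times\mathbf{V}$ and a set $L\subseteq\mathbf{P}$ (in the analysis $A=\mathit{Ain}_n$, $L=\mathit{Lout}_n$): - use $x$: $\mathit{Def}=\emptyset$, $\mathit{Kill}=\emptyset$, $\mathit{Ref}=\{x\}$, $\mathit{Pointee}=\emptyset$. - $x=\&a$: $\mathit{Def}=\{x\}$, $\mathit{Kill}=\{x\}$, $\mathit{Ref}=\emptyset$, $\mathit{Pointee}=\{a\}$. - $x=y$: $\mathit{Def}=\{x\}$,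 $\mathit{Kill}=\{x\}$, $\mathit{Ref}=\{y\}$ if $\mathit{Def}\cap L\neq\emptyset$ and $\emptyset$ otherwise, $\mathit{Pointee}=A\{y\}$. - $x=*y$: $\mathit{Def}=\{x\}$, $\mathit{Kill}=\{x\}$, $\mathit{Ref}=\{y\}\cup\big((A\{y\})\cap\mathbf{P}\big)$ if $\mathit{Def}\cap L\neq\emptyset$ and $\emptyset$ otherwise, $\mathit{Pointee}=A^2\{y\}$. - $*x=y$: $\mathit{Def}=(A\{x\})\cap\mathbf{P}$, $\mathit{Kill}=(\mathit{Must}(A)\{x\})\cap\mathbf{P}$, $\mathit{Ref}=\{x,y\}$ if $\mathit{Def}\cap L\neq\emptyset$ and $\{x\}$ otherwise, $\mathit{Pointee}=A\{y\}$. - other: all four are $\emptyset$. *)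

From mathcomp Require Import all_boot.
Set Implicit Arguments.
Unset Strict Implicit.
Unset Printing Implicit Defensive.

Section PointsTo.
(* V : finite set of variables, P : pointer variables, q : the undefined location "?" *)
Variables (V : finType) (P : {set V}) (q : V).

Definition rel_t := {set V * V}.

Definition rimg (R : rel_t) (X : {set V}) : {set V} :=
  [set v | [exists u in X, (u, v) \in R]].

Definition rrestr (R : rel_t) (X : {set V}) : rel_t :=
  [set p in R | p.1 \in X].

Definition rsq (R : rel_t) : rel_t :=
  [set p : V * V | [exists v, ((p.1, v) \in R) && ((v, p.2) \in R)]].

Definition Mset (R : rel_t) (x : V) : {set V} :=
  let Rx := rrestr R [set x] in
  if (Rx == set0) || (Rx == [set (x, q)]) then setT
  else if [pick y | (y != q) && (Rx == [set (x, y)])] is Some y then [set y]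
  else set0.

Definition Must (R : rel_t) : rel_t :=
  [set p : V * V | (p.1 \in P) && (p.2 \in Mset R p.1)].

Inductive node :=
| NUse   of V
| NAddr  of V & V      (* x = &a *)
| NCopy  of V & V      (* x = y *)
| NLoad  of V & V      (* x = *y *)
| NStore of V & V      (* *x = y *)
| NOther.

Definition node_wf (n : node) : bool :=
  match n with
  | NUse x => x \in P
  | NAddr x _ => x \in P
  | NCopy x y | NLoad x y | NStore x y => (x \in P) && (y \in P)
  | NOther => true
  end.

Definition Def (n : node) (A : rel_t) : {set V} :=
  match n with
  | NUse _ => set0
  | NAddr x _ | NCopy x _ | NLoad x _ => [set x]
  | NStore x _ => rimg A [set x] :&: P
  | NOther => set0
  end.

Definition Kill (n : node) (A : rel_t) : {set V} :=
  match n with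
  | NUse _ => set0
  | NAddr x _ | NCopy x _ | NLoad x _ => [set x]
  | NStore x _ => rimg (Must A) [set x] :&: P
  | NOther => set0
  end.

Definition Ref (n : node) (L : {set V}) (A : rel_t) : {set V} :=
  match n with
  | NUse x => [set x]
  | NAddr _ _ => set0
  | NCopy _ y => if Def n A :&: L != set0 then [set y] else set0
  | NLoad _ y =>
      if Def n A :&: L != set0 then [set y] :|: (rimg A [set y] :&: P) else set0
  | NStore x y => if Def n A :&: L != set0 then [set x; y] else [set x]
  | NOther => set0
  end.

Definition Pointee (n : node) (A : rel_t) : {set V} :=
  match n with
  | NUse _ => set0
  | NAddr _ a => [set a]
  | NCopy _ y => rimg A [set y]
  | NLoad _ y => rimg (rsq A) [set y]
  | NStore _ y => rimg A [set y]
  | NOther => set0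
  end.

Definition fL (n : node) (l : {set V}) (a : rel_t) : {set V} :=
  (l :\: Kill n a) :|: Ref n l a.

Definition fA (n : node) (l : {set V}) (a : rel_t) : rel_t :=
  rrestr ((a :\: setX (Kill n a) setT) :|: setX (Def n a) (Pointee n a)) l.

End PointsTo.

From mathcomp Require Import all_boot.

(* Both f_L and f_A are built from the extractor functions by the set
   operations union, difference, product, restriction, relational image and
   relational square, every one of which is monotone in its "positive"
   arguments and antitone in the subtracted one.  So it suffices to show
   that Def, Ref and Pointee are monotone in (l, a) and that Kill is
   antitone in a.  The only non-syntactic point is Kill of a store "*x = y",
   which is built from Must(a): we characterize membership in the
   must-points-to set M_x (lemma mem_Mset) as "all targets of x in a are y,
   or all of them are ?", a condition which is visibly preserved when a
   shrinks; hence Must, and with it Kill, is antitone. *)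

Set Implicit Arguments.
Unset Strict Implicit.
Unset Printing Implicit Defensive.

Section Monotonicity.
Variables (V : finType) (P : {set V}) (q : V).

Lemma rimg_mono (R1 R2 : {set V * V}) (X1 X2 : {set V}) :
  R1 \subset R2 -> X1 \subset X2 -> rimg R1 X1 \subset rimg R2 X2.
Proof.
move=> sR sX; apply/subsetP => v; rewrite !inE => /existsP[u /andP[uX uR]].
by apply/existsP; exists u; rewrite (subsetP sX _ uX) (subsetP sR _ uR).
Qed.

Lemma rsq_mono (R1 R2 : {set V * V}) : R1 \subset R2 -> rsq R1 \subset rsq R2.
Proof.
move=> sR; apply/subsetP => p; rewrite !inE => /existsP[u /andP[h1 h2]].
by apply/existsP; exists u; rewrite (subsetP sR _ h1) (subsetP sR _ h2).
Qed.

Lemma rrestr_mono (R1 R2 : {set V * V}) (X1 X2 : {set V}) :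
  R1 \subset R2 -> X1 \subset X2 -> rrestr R1 X1 \subset rrestr R2 X2.
Proof.
move=> sR sX; apply/subsetP => p; rewrite !inE => /andP[h1 h2].
by rewrite (subsetP sR _ h1) (subsetP sX _ h2).
Qed.

Lemma restr1_sub1 (R : {set V * V}) (x y : V) :
  (rrestr R [set x] \subset [set (x, y)]) =
  [forall z, ((x, z) \in R) ==> (z == y)].
Proof.
apply/subsetP/forallP => [sub z | all_y [u z]].
- apply/implyP => xzR; have := sub (x, z); rewrite !inE xzR eqxx => /(_ isT).
  by rewrite xpair_eqE eqxx.
- rewrite !inE /= => /andP[uzR /eqP eux]; rewrite eux in uzR *.
  by rewrite xpair_eqE eqxx (implyP (all_y z) uzR).
Qed.

Lemma mem_Mset (R : {set V * V}) (x y : V) :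
  (y \in Mset q R x) =
  [forall z, ((x, z) \in R) ==> (z == y)] ||
  [forall z, ((x, z) \in R) ==> (z == q)].
Proof.
rewrite /Mset -!restr1_sub1; set Rx := rrestr R [set x].
have -> : (Rx == set0) || (Rx == [set (x, q)]) = (Rx \subset [set (x, q)]).
  by rewrite subset1 orbC.
case: ifP => [_ | /negbT nq]; first by rewrite inE orbT.
rewrite orbF; have n0 : Rx != set0.
  by apply: contra nq => /eqP ->; exact: sub0set.
case: pickP => [y0 /andP[_ /eqP ->] | none].
  by rewrite !inE sub1set inE xpair_eqE eqxx eq_sym.
rewrite inE subset1 (negbTE n0) orbF; apply/esym/negbTE/eqP => Ey.
have := none y; rewrite /= Ey eqxx andbT => /negbT/negPn/eqP yq.
by move: nq; rewrite Ey yq subxx.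
Qed.

Lemma Mset_anti (a1 a2 : {set V * V}) (x : V) :
  a2 \subset a1 -> Mset q a1 x \subset Mset q a2 x.
Proof.
move=> sa; have shrink c :
    [forall z, ((x, z) \in a1) ==> c z] -> [forall z, ((x, z) \in a2) ==> c z].
  move=> /forallP all1; apply/forallP => z; apply/implyP => /(subsetP sa).
  exact: implyP (all1 z).
apply/subsetP => y; rewrite !mem_Mset => /orP[/shrink -> // | /shrink ->].
exact: orbT.
Qed.

Lemma Must_anti (a1 a2 : {set V * V}) :
  a2 \subset a1 -> Must P q a1 \subset Must P q a2.
Proof.
move=> sa; apply/subsetP => p; rewrite !inE => /andP[-> h] /=.
exact: (subsetP (Mset_anti p.1 sa)) _ h.
Qed.

Lemma Kill_anti (n : node V) (a1 a2 : {set V * V}) :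
  a2 \subset a1 -> Kill P q n a1 \subset Kill P q n a2.
Proof.
move=> sa; case: n => //= *; rewrite ?subxx //.
by apply: setSI; apply: rimg_mono (subxx _); apply: Must_anti.
Qed.

Lemma Def_mono (n : node V) (a1 a2 : {set V * V}) :
  a2 \subset a1 -> Def P n a2 \subset Def P n a1.
Proof.
move=> sa; case: n => //= *; rewrite ?subxx //.
by apply: setSI; apply: rimg_mono (subxx _).
Qed.

Lemma Pointee_mono (n : node V) (a1 a2 : {set V * V}) :
  a2 \subset a1 -> Pointee n a2 \subset Pointee n a1.
Proof.
move=> sa; case: n => //= *; rewrite ?subxx //;
  apply: rimg_mono (subxx _) => //; exact: rsq_mono.
Qed.

(* Ref is monotone: its guard "Def ∩ l is nonempty" is monotone, and each
   branch of it is monotone with the "true" branch the larger one. *)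
Lemma Ref_mono (n : node V) (l1 l2 : {set V}) (a1 a2 : {set V * V}) :
  l2 \subset l1 -> a2 \subset a1 -> Ref P n l2 a2 \subset Ref P n l1 a1.
Proof.
move=> sl sa.
have live : Def P n a2 :&: l2 != set0 -> Def P n a1 :&: l1 != set0.
  by apply: contra => /eqP E; rewrite -subset0 -E setISS // Def_mono.
case: n live => [x|x a|x y|x y|x y|] /= live; rewrite ?subxx //.
- case: ifP => h2; last exact: sub0set.
  by rewrite (live h2) subxx.
- case: ifP => h2; last exact: sub0set.
  by rewrite (live h2) setUS // setSI // rimg_mono.
- case: ifP => h2; first by rewrite (live h2) subxx.
  by case: ifP => _; rewrite ?subxx // subsetUl.
Qed.

Lemma fL_mono (n : node V) (l1 l2 : {set V}) (a1 a2 : {set V * V}) :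
  l2 \subset l1 -> a2 \subset a1 -> fL P q n l2 a2 \subset fL P q n l1 a1.
Proof.
move=> sl sa; apply: setUSS; last exact: Ref_mono.
by apply: setDSS => //; apply: Kill_anti.
Qed.

Lemma fA_mono (n : node V) (l1 l2 : {set V}) (a1 a2 : {set V * V}) :
  l2 \subset l1 -> a2 \subset a1 -> fA P q n l2 a2 \subset fA P q n l1 a1.
Proof.
move=> sl sa; apply: rrestr_mono => //; apply: setUSS.
- by apply: setDSS => //; apply: setXS (subxx _); apply: Kill_anti.
- by apply: setXS; [apply: Def_mono | apply: Pointee_mono].
Qed.

End Monotonicity.

Theorem theorem1 (V : finType) (P : {set V}) (q : V) (n : node V) :
  q \notin P -> node_wf P n ->
  forall (l1 l2 : {set V}) (a1 a2 : {set V * V}),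
    l1 \subset P -> l2 \subset P ->
    a1 \subset setX P setT -> a2 \subset setX P setT ->
    l2 \subset l1 -> a2 \subset a1 ->
    fL P q n l2 a2 \subset fL P q n l1 a1 /\
    fA P q n l2 a2 \subset fA P q n l1 a1.
Proof.
move=> _ _ l1 l2 a1 a2 _ _ _ _ sl sa.
by split; [apply: fL_mono | apply: fA_mono].
Qed.
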